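(* Let $\Bbbk$ be an algebraically closed field of characteristic $0$, let $P=\Bbbk[x_1,\dots,x_n]$ be a quadratic Poisson algebra, let $\phi$ be a graded Poisson automorphism of $P$ and $\widetilde\phi$ the corresponding graded automorphism of $U(P)$. Suppose $\phi|_{P_1}$ has distinct eigenvalues $\lambda_1,\dots,\lambda_m$ with multiplicities $c_1,\dots,c_m$ respectively. Then $\widetilde\phi|_{U(P)_1}$ has eigenvalues $\lambda_1,\dots,\lambda_m$ with multiplicities $2c_1,\dots,2c_m$ respectively.
   Context: $P$ has the standard grading and is quadratic: $\{P_1,P_1\}\subseteq P_2$. $U(P)$ is the $\Bbbk$-algebra generated by $x_1,\dots,x_n,y_1,\dots,y_n$ (all of degree $1$, so $U(P)_1=\bigoplus_i\Bbbk x_i\oplus\bigoplus_i\Bbbk y_i$) with relations $[x_i,x_j]=0$, $[y_i,y_j]=\sum_k\frac{\partial\{x_i,x_j\}}{\partial x_k}y_k$, $[y_i,x_j]=\{x_i,x_j\}$. The induced automorphism is $\widetilde\phi(x_i)=\phi(x_i)$, $\widetilde\phi(y_i)=\sum_j\frac{\partial\phi(x_i)}{\partial x_j}y_j$. *)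

From HB Require Import structures.
From mathcomp Require Import all_boot all_order all_algebra.
From mathcomp Require Import mpoly.
Set Implicit Arguments. Unset Strict Implicit. Unset Printing Implicit Defensive.
Import Order.TTheory GRing.Theory.
Local Open Scope ring_scope.

(* A Poisson bracket on P = K[x_1..x_n]: K-bilinear (linear in the first
   argument + antisymmetry), antisymmetric, biderivation (Leibniz), Jacobi. *)
Definition is_poisson_bracket (K : fieldType) (n : nat)
    (br : {mpoly K[n]} -> {mpoly K[n]} -> {mpoly K[n]}) : Prop :=
  (forall (a : K) p q r, br (a *: p + q) r = a *: br p r + br q r) /\
  (forall p q, br p q = - br q p) /\
  (forall p q r, br p (q * r) = br p q * r + q * br p r) /\
  (forall p q r, br p (br q r) + br q (br r p) + br r (br p q) = 0).

Definition quadratic_bracket (K : fieldType) (n : nat)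
    (br : {mpoly K[n]} -> {mpoly K[n]} -> {mpoly K[n]}) : Prop :=
  forall i j : 'I_n, br 'X_i 'X_j \is 2.-homog.

Definition graded_poisson_automorphism (K : fieldType) (n : nat)
    (br : {mpoly K[n]} -> {mpoly K[n]} -> {mpoly K[n]})
    (phi : {mpoly K[n]} -> {mpoly K[n]}) : Prop :=
  (forall (a : K) p q, phi (a *: p + q) = a *: phi p + phi q) /\
  (forall p q, phi (p * q) = phi p * phi q) /\
  phi 1 = 1 /\
  bijective phi /\
  (forall (d : nat) p, p \is d.-homog -> phi p \is d.-homog) /\
  (forall p q, phi (br p q) = br (phi p) (phi q)).

(* Matrix of phi|_{P_1} in the basis x_1..x_n (row convention:
   row i = coordinates of phi(x_i), i.e. phi(x_i) = sum_j M i j x_j). *)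
Definition restr_mx (K : fieldType) (n : nat)
    (phi : {mpoly K[n]} -> {mpoly K[n]}) : 'M[K]_n :=
  \matrix_(i, j) (phi 'X_i)@_(U_(j))%MM.

(* Matrix of tilde phi|_{U(P)_1} in the basis x_1..x_n, y_1..y_n:
   tilde phi(x_i) = phi(x_i),
   tilde phi(y_i) = sum_j (d phi(x_i) / d x_j) y_j,
   where the (degree 0) partial derivative is read as a scalar of K. *)
Definition tilde_mx (K : fieldType) (n : nat)
    (phi : {mpoly K[n]} -> {mpoly K[n]}) : 'M[K]_(n + n) :=
  block_mx (restr_mx phi) 0 0
    (\matrix_(i, j) ((phi 'X_i)^`M(j))@_0%MM).

From HB Require Import structures.
From mathcomp Require Import all_boot all_order all_algebra.
From mathcomp Require Import mpoly.
Import GRing.Theory.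
Local Open Scope ring_scope.

(* The constant term of d p / d x_j is the coefficient of x_j in p, so the
   y-block of the matrix of tilde phi on U(P)_1 is the matrix of phi on P_1.
   Hence tilde phi|_{U(P)_1} is block diagonal with two copies of phi|_{P_1}
   and its characteristic polynomial is the square of that of phi|_{P_1}. *)

Lemma mcoeff0_mderiv (R : nzRingType) (n : nat) (p : {mpoly R[n]}) (j : 'I_n) :
  (p^`M(j))@_0 = p@_U_(j).
Proof. by rewrite mcoeff_mderiv add0m mnm0E. Qed.

Lemma tilde_mxE (K : fieldType) (n : nat) (phi : {mpoly K[n]} -> {mpoly K[n]}) :
  tilde_mx phi = block_mx (restr_mx phi) 0 0 (restr_mx phi).
Proof.
congr block_mx; apply/matrixP => i j.
by rewrite !mxE mcoeff0_mderiv.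
Qed.

Lemma char_poly_block_diag_dup (R : comNzRingType) (n : nat) (A : 'M[R]_n) :
  char_poly (block_mx A 0 0 A) = char_poly A ^+ 2.
Proof. by rewrite /char_poly char_block_diag_mx det_ublock expr2. Qed.

Theorem lemma2p5 (K : closedFieldType) (charK0 : [pchar K] =i pred0)
    (n : nat) (br : {mpoly K[n]} -> {mpoly K[n]} -> {mpoly K[n]})
    (Hbr : is_poisson_bracket br) (Hquad : quadratic_bracket br)
    (phi : {mpoly K[n]} -> {mpoly K[n]})
    (Hphi : graded_poisson_automorphism br phi)
    (m : nat) (lam : 'I_m -> K) (c : 'I_m -> nat)
    (Hlam : injective lam) (Hc : forall i, (0 < c i)%N)
    (Heig : char_poly (restr_mx phi) = \prod_(i < m) ('X - (lam i)%:P) ^+ c i) :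
  char_poly (tilde_mx phi) = \prod_(i < m) ('X - (lam i)%:P) ^+ (2 * c i).
Proof.
rewrite tilde_mxE char_poly_block_diag_dup Heig -prodrXl.
by apply: eq_bigr => i _; rewrite mulnC exprM.
Qed.
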